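(* There exists a super-core of some non-shrinking function $f:\{0,1\}^n\to\{0,1\}^{m(n)}$ (i.e. $m(n)\ge n$ for all $n$) computable by polynomial-size circuits if and only if there exists a super-bit $g:\{0,1\}^n\to\{0,1\}^{n+1}$.
   Context: $U_k$ is uniform on $\{0,1\}^k$. A generator $g:\{0,1\}^n\to\{0,1\}^{n+1}$ computable by polynomial-size circuits is a super-bit if for every nondeterministic polynomial-size circuit family $D$ (accepting iff some witness gives output 1), every polynomial $p$ and all sufficiently large $n$, $\Pr[D(U_{n+1})=1]-\Pr[D(g(U_n))=1]<1/p(n)$. A predicate $b$ computable by polynomial-size circuits is a super-core of $f:\{0,1\}^n\to\{0,1\}^{m(n)}$ if there do not exist a nondeterministic polynomial-size circuit family $\mathcal{A}_1$, a co-nondeterministic polynomial-size circuit family $\mathcal{A}_2$ (rejecting iff some witness gives output 0), a polynomial $p$ and infinitely many $n$ such that either $\Pr_{x\in\{0,1\}^n}[\mathcal{A}_1(f(x),1^n)=b(x)=0]+\tfrac12\Pr_{y\in\{0,1\}^{m(n)}}[\mathcal{A}_1(y,1^n)=1]\ge \tfrac12+\tfrac1{p(n)}$ or $\Pr_{x}[\mathcal{A}_2(f(x),1^n)=b(x)=1]+\tfrac12\Pr_{y}[\mathcal{A}_2(y,1^n)=0]\ge \tfrac12+\tfrac1{p(n)}$. *)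

From mathcomp Require Import all_boot all_algebra.
Set Implicit Arguments. Unset Strict Implicit. Unset Printing Implicit Defensive.
Import GRing.Theory Num.Theory.

(* Wires 0..k-1 are the inputs; gate number j produces wire k+j and may only
   read earlier wires (reading a non-existent wire yields false). *)
Inductive gate : Type :=
| GAnd of nat & nat
| GOr  of nat & nat
| GNot of nat.

Definition eval_gate (w : seq bool) (g : gate) : bool :=
  match g with
  | GAnd i j => nth false w i && nth false w j
  | GOr i j  => nth false w i || nth false w j
  | GNot i   => ~~ nth false w i
  end.

Record circuit : Type := Circuit { gates : seq gate; outs : seq nat }.

Definition wires (c : circuit) (x : seq bool) : seq bool :=
  foldl (fun w g => rcons w (eval_gate w g)) x (gates c).

Definition eval (c : circuit) (x : seq bool) : seq bool :=
  [seq nth false (wires c x) i | i <- outs c].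

Definition out1 (c : circuit) (x : seq bool) : bool := nth false (eval c x) 0.

Definition csize (c : circuit) : nat := (size (gates c) + size (outs c))%N.

(* polynomial bounds c * n^k + c (every polynomial is dominated by one) *)
Definition pbound (c k n : nat) : nat := (c * n ^ k + c)%N.

Definition poly_size (C : nat -> circuit) : Prop :=
  exists c k, forall n, (csize (C n) <= pbound c k n)%N.

Definition poly_computable (m : nat -> nat)
    (f : forall n, n.-tuple bool -> (m n).-tuple bool) : Prop :=
  exists C : nat -> circuit, poly_size C /\
    forall n (x : n.-tuple bool), eval (C n) x = tval (f n x).

Definition pred_poly_computable (b : forall n, n.-tuple bool -> bool) : Prop :=
  exists C : nat -> circuit, poly_size C /\
    forall n (x : n.-tuple bool), eval (C n) x = [:: b n x].

(* the circuit of index n reads its input followed by a witness of length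
   ndw n *)
Record ndfam : Type := NDFam { ndc : nat -> circuit; ndw : nat -> nat }.

Definition nd_poly (A : ndfam) : Prop :=
  exists c k, forall n, (csize (ndc A n) + ndw A n <= pbound c k n)%N.

Definition nd_out (A : ndfam) (n : nat) (y : seq bool) : bool :=
  [exists u : (ndw A n).-tuple bool, out1 (ndc A n) (y ++ tval u)].

Definition co_out (A : ndfam) (n : nat) (y : seq bool) : bool :=
  [forall u : (ndw A n).-tuple bool, out1 (ndc A n) (y ++ tval u)].

Definition prob (n : nat) (P : n.-tuple bool -> bool) : rat :=
  (#|[set x : n.-tuple bool | P x]|%:R / (2 ^ n)%:R)%R.
Arguments prob n P : clear implicits.

Definition super_bit (g : forall n, n.-tuple bool -> (n.+1).-tuple bool) : Prop :=
  poly_computable (m := S) g /\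
  forall D : ndfam, nd_poly D ->
  forall c k : nat, (0 < c)%N ->
  exists N : nat, forall n : nat, (N <= n)%N ->
    (prob (n.+1) (fun y => nd_out D n (tval y))
     - prob n (fun x => nd_out D n (tval (g n x))) < 1 / (pbound c k n)%:R)%R.

Definition super_core (m : nat -> nat)
    (f : forall n, n.-tuple bool -> (m n).-tuple bool)
    (b : forall n, n.-tuple bool -> bool) : Prop :=
  pred_poly_computable b /\
  ~ (exists (A1 A2 : ndfam) (c k : nat),
       nd_poly A1 /\ nd_poly A2 /\ (0 < c)%N /\
       forall N : nat, exists2 n : nat, (N <= n)%N &
         ((prob n (fun x => ~~ nd_out A1 n (tval (f n x)) && ~~ b n x)
           + 1 / 2 * prob (m n) (fun y => nd_out A1 n (tval y))
           >= 1 / 2 + 1 / (pbound c k n)%:R)%R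
          \/
          (prob n (fun x => co_out A2 n (tval (f n x)) && b n x)
           + 1 / 2 * prob (m n) (fun y => ~~ co_out A2 n (tval y))
           >= 1 / 2 + 1 / (pbound c k n)%:R)%R)).

From mathcomp Require Import all_boot all_algebra.
From mathcomp Require Import zify ring lra order.
From Stdlib Require Import Classical.
Set Implicit Arguments. Unset Strict Implicit. Unset Printing Implicit Defensive.
Import Order.TTheory GRing.Theory Num.Theory.

(* (<=) If g is a super-bit, split g(x) = f(x) ++ [b(x)]: then b is a
   super-core of f.  An adversary pair (A1, A2) for (f, b) yields, on each
   length where A1 (resp. A2) succeeds, the nondeterministic distinguisher
   D(z, r) = A1(z) || r (resp. D(z, r) = ~A2(z) || ~r), whose advantage
   against g is exactly the adversary's excess over 1/2.
   (=>) If b is a super-core of f with m(n) >= n, the generator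
   g(x) = take n (f x) ++ [b x] is a super-bit.  A distinguisher D with
   advantage e yields A1(y) = D(take n y, 0) (nondeterministic) and
   A2(y) = ~D(take n y, 1) (co-nondeterministic) whose two scores sum to
   1 + e, so one of them exceeds 1/2 + e/2.
   Both directions rest on one identity, [advantage_score]. *)

Definition step (w : seq bool) (g : gate) : seq bool := rcons w (eval_gate w g).

Definition run (gs : seq gate) (x : seq bool) : seq bool := foldl step x gs.

Lemma wiresE C x : wires C x = run (gates C) x.
Proof. by []. Qed.

Lemma run_cat gs1 gs2 x : run (gs1 ++ gs2) x = run gs2 (run gs1 x).
Proof. exact: foldl_cat. Qed.

Lemma size_run gs x : size (run gs x) = size x + size gs.
Proof.
elim: gs x => [|g gs IH] x /=; first by rewrite addn0.
by rewrite IH size_rcons addSnnS.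
Qed.

Lemma size_wires C x : size (wires C x) = size x + size (gates C).
Proof. exact: size_run. Qed.

Lemma run_prefix gs x : take (size x) (run gs x) = x.
Proof.
elim: gs x => [|g gs IH] x /=; first by rewrite take_size.
have := IH (step x g); rewrite /step size_rcons => hIH.
by rewrite -(take_takel _ (leqnSn (size x))) hIH -cats1 take_size_cat.
Qed.

Lemma nth_cat_size (x w : seq bool) i : nth false (x ++ w) (size x + i) = nth false w i.
Proof. by rewrite nth_cat ltnNge leq_addr addKn. Qed.

Inductive src := SVar of nat | SConst of bool.

Definition srcval (x : seq bool) (e : src) : bool :=
  match e with SVar i => nth false x i | SConst b => b end.

(* A gate copying a source; [K] is a wire index beyond every wire read so far,
   which evaluates to [false] and provides the constants. *)
Definition copy_gate (L K : nat) (e : src) : gate :=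
  match e with
  | SVar i => if i < L then GAnd i i else GAnd K K
  | SConst b => if b then GNot K else GAnd K K
  end.

Lemma run_copy (w : seq bool) K sg : size w + size sg <= K ->
  run (map (copy_gate (size w) K) sg) w = w ++ map (srcval w) sg.
Proof.
suff gen v : size w + size v + size sg <= K ->
    run (map (copy_gate (size w) K) sg) (w ++ v) = w ++ v ++ map (srcval w) sg.
  by move=> hK; have := gen [::]; rewrite cats0 addn0; apply.
elim: sg v => [|e sg IH] v hK /=; first by rewrite cats0.
have high : nth false (w ++ v) K = false by rewrite nth_default // size_cat; lia.
have -> : step (w ++ v) (copy_gate (size w) K e) = w ++ rcons v (srcval w e).
  rewrite /step rcons_cat; congr (_ ++ rcons _ _).
  case: {hK} e => [i|[]] /=; rewrite ?high //.
  case: ifP => hi /=; first by rewrite nth_cat hi andbb.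
  by rewrite high nth_default // leqNgt hi.
rewrite IH; first by rewrite cat_rcons.
by rewrite size_rcons; move: hK; rewrite /=; lia.
Qed.

Definition shift_gate (s : nat) (g : gate) : gate :=
  match g with
  | GAnd i j => GAnd (s + i) (s + j)
  | GOr i j => GOr (s + i) (s + j)
  | GNot i => GNot (s + i)
  end.

Lemma run_shift (w v : seq bool) gs :
  run (map (shift_gate (size w)) gs) (w ++ v) = w ++ run gs v.
Proof.
elim: gs v => [|g gs IH] v //=.
have -> : step (w ++ v) (shift_gate (size w) g) = w ++ step v g.
  by rewrite /step rcons_cat; case: g => * /=; rewrite !nth_cat_size.
exact: IH.
Qed.

(* [rewire L keep sg C]: on an input of length [L], output the sources [keep]
   followed by the outputs of [C] run on the sources [sg]. *)
Definition rewire (L : nat) (keep sg : seq src) (C : circuit) : circuit :=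
  let s := L + size keep in
  Circuit (map (copy_gate L (s + size sg)) (keep ++ sg) ++ map (shift_gate s) (gates C))
          (iota L (size keep) ++ map (addn s) (outs C)).

Lemma wires_rewire L keep sg C (x : seq bool) : size x = L ->
  wires (rewire L keep sg C) x =
  x ++ map (srcval x) keep ++ wires C (map (srcval x) sg).
Proof.
move=> <-; rewrite wiresE run_cat run_copy; last by rewrite size_cat addnA.
have -> : size x + size keep = size (x ++ map (srcval x) keep) by rewrite size_cat size_map.
by rewrite map_cat catA run_shift -catA.
Qed.

Lemma eval_rewire L keep sg C (x : seq bool) : size x = L ->
  eval (rewire L keep sg C) x = map (srcval x) keep ++ eval C (map (srcval x) sg).
Proof.
move=> hx; rewrite /eval (wires_rewire _ _ _ hx) /= map_cat; congr (_ ++ _).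
  rewrite map_nth_iota; last by rewrite !size_cat size_map hx; lia.
  by rewrite -hx drop_size_cat // take_size_cat ?size_map.
rewrite -map_comp; apply: eq_map => o /=.
by rewrite -hx -(size_map (srcval x) keep) -size_cat catA nth_cat_size.
Qed.

Definition glue (C1 C2 : circuit) : circuit := Circuit (gates C1 ++ gates C2) (outs C2).

Lemma eval_glue C1 C2 x : eval (glue C1 C2) x = eval C2 (wires C1 x).
Proof. by rewrite /eval !wiresE /= run_cat. Qed.

Lemma srcval_outs C x : map (srcval (wires C x)) (map SVar (outs C)) = eval C x.
Proof. by rewrite -map_comp. Qed.

Definition seqc (L : nat) (C1 C2 : circuit) : circuit :=
  glue C1 (rewire (L + size (gates C1)) [::] (map SVar (outs C1)) C2).

Lemma eval_seqc L C1 C2 x : size x = L -> eval (seqc L C1 C2) x = eval C2 (eval C1 x).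
Proof.
move=> hx; rewrite eval_glue eval_rewire ?size_wires ?hx //.
by rewrite srcval_outs.
Qed.

Definition parc (L : nat) (C1 C2 : circuit) : circuit :=
  glue C1 (rewire (L + size (gates C1)) (map SVar (outs C1)) (map SVar (iota 0 L)) C2).

Lemma eval_parc L C1 C2 x : size x = L -> eval (parc L C1 C2) x = eval C1 x ++ eval C2 x.
Proof.
move=> hx; rewrite eval_glue eval_rewire ?size_wires ?hx // srcval_outs; congr (_ ++ eval _ _).
rewrite -map_comp map_nth_iota0; last by rewrite size_wires; lia.
by rewrite -hx run_prefix.
Qed.

Definition proj (i : nat) : circuit := Circuit [::] [:: i].

Lemma eval_proj i v : eval (proj i) v = [:: nth false v i].
Proof. by []. Qed.

Definition first_out (L : nat) (C : circuit) : circuit := seqc L C (proj 0).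

Lemma eval_first_out L C x : size x = L -> eval (first_out L C) x = [:: out1 C x].
Proof. by move=> hx; rewrite eval_seqc. Qed.

Lemma eval_take_outs n C x :
  eval (Circuit (gates C) (take n (outs C))) x = take n (eval C x).
Proof. by rewrite /eval map_take. Qed.

Lemma eval_drop_outs n C x :
  eval (Circuit (gates C) (drop n (outs C))) x = drop n (eval C x).
Proof. by rewrite /eval map_drop. Qed.

Lemma csize_rewire L keep sg C :
  csize (rewire L keep sg C) = 2 * size keep + size sg + csize C.
Proof. rewrite /csize /= !size_cat !size_map size_cat size_iota; lia. Qed.

Lemma csize_glue C1 C2 : csize (glue C1 C2) = size (gates C1) + csize C2.
Proof. rewrite /csize /= size_cat; lia. Qed.

Lemma csize_seqc L C1 C2 : csize (seqc L C1 C2) = csize C1 + csize C2.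
Proof. rewrite csize_glue csize_rewire /= size_map /csize; lia. Qed.

Lemma csize_parc L C1 C2 : csize (parc L C1 C2) <= 2 * csize C1 + L + csize C2.
Proof. rewrite csize_glue csize_rewire !size_map size_iota /csize; lia. Qed.

Lemma csize_first_out L C : csize (first_out L C) = csize C + 1.
Proof. by rewrite csize_seqc. Qed.

Definition xor_gate (t : bool) (i : nat) : gate := if t then GNot i else GAnd i i.

Lemma eval_xor_gate t w i : eval_gate w (xor_gate t i) = nth false w i (+) t.
Proof. by case: t => /=; rewrite ?andbb ?addbT ?addbF. Qed.

Lemma srcval_iota (x : seq bool) i k : i + k <= size x ->
  map (srcval x) (map SVar (iota i k)) = take k (drop i x).
Proof. by move=> h; rewrite -map_comp map_nth_iota //; lia. Qed.

(* On [rcons z r ++ u] (|z| = n, |u| = w) computes [(C(z ++ u) (+) t) || (r (+) t)]. *)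
Definition or_last_circ (n w : nat) (t : bool) (C : circuit) : circuit :=
  let L := n.+1 + w in
  seqc L (parc L (rewire L [::] (map SVar (iota 0 n ++ iota n.+1 w)) (first_out (n + w) C))
                 (proj n))
       (Circuit [:: xor_gate t 0; xor_gate t 1; GOr 2 3] [:: 4]).

Lemma out1_or_last n w t C (z u : seq bool) r : size z = n -> size u = w ->
  out1 (or_last_circ n w t C) (rcons z r ++ u) = (out1 C (z ++ u) (+) t) || (r (+) t).
Proof.
move=> hz hu; have hx : size (rcons z r ++ u) = n.+1 + w by rewrite size_cat size_rcons hz hu.
have sel : map (srcval (rcons z r ++ u)) (map SVar (iota 0 n ++ iota n.+1 w)) = z ++ u.
  rewrite map_cat map_cat !srcval_iota ?hx; try lia.
  rewrite drop0 cat_rcons -hz take_size_cat // -cat_rcons -(size_rcons z r).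
  by rewrite drop_size_cat // -hu take_size.
have last_bit : nth false (rcons z r ++ u) n = r by rewrite cat_rcons nth_cat hz ltnn subnn.
rewrite /out1 eval_seqc // eval_parc // eval_rewire // sel eval_first_out ?size_cat ?hz ?hu //.
by rewrite eval_proj last_bit /eval /= !eval_xor_gate.
Qed.

(* On [y ++ u] (|y| = m, |u| = w) computes [C(rcons (take n y) r ++ u) (+) t]. *)
Definition restrict_circ (n m w : nat) (r t : bool) (C : circuit) : circuit :=
  let L := m + w in
  seqc L (rewire L [::] (map SVar (iota 0 n) ++ SConst r :: map SVar (iota m w))
                 (first_out (n.+1 + w) C))
       (Circuit [:: xor_gate t 0] [:: 1]).

Lemma out1_restrict n m w r t C (y u : seq bool) : n <= m -> size y = m -> size u = w ->
  out1 (restrict_circ n m w r t C) (y ++ u) = out1 C (rcons (take n y) r ++ u) (+) t.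
Proof.
move=> hnm hy hu; have hx : size (y ++ u) = m + w by rewrite size_cat hy hu.
have sel : map (srcval (y ++ u)) (map SVar (iota 0 n) ++ SConst r :: map SVar (iota m w))
           = rcons (take n y) r ++ u.
  rewrite map_cat /= !srcval_iota ?hx; try lia.
  rewrite drop0 takel_cat ?hy // -hy drop_size_cat // -hu take_size.
  by rewrite cat_rcons.
have hsz : size (rcons (take n y) r ++ u) = n.+1 + w.
  by rewrite size_cat size_rcons size_takel ?hy ?hu.
rewrite /out1 eval_seqc // eval_rewire // sel eval_first_out //.
by rewrite /eval /= eval_xor_gate.
Qed.

Lemma csize_or_last n w t C : csize (or_last_circ n w t C) <= 3 * n + 3 * (csize C + w) + 8.
Proof.
rewrite csize_seqc; have := csize_parc (n.+1 + w)
  (rewire (n.+1 + w) [::] (map SVar (iota 0 n ++ iota n.+1 w)) (first_out (n + w) C)) (proj n).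
rewrite csize_rewire csize_first_out size_map size_cat !size_iota /csize /=; lia.
Qed.

Lemma csize_restrict n m w r t C : csize (restrict_circ n m w r t C) = n + w + csize C + 4.
Proof.
rewrite csize_seqc csize_rewire csize_first_out size_cat /= !size_map !size_iota /csize /=; lia.
Qed.

(* Polynomially bounded size functions; [nd_poly A] and [poly_size C] are
   instances of this notion by definition. *)
Definition polybounded (s : nat -> nat) : Prop := exists c k, forall n, s n <= pbound c k n.

Lemma polyboundedW s1 s2 : (forall n, s1 n <= s2 n) -> polybounded s2 -> polybounded s1.
Proof. by move=> h [c [k hb]]; exists c, k => n; apply: leq_trans (h n) (hb n). Qed.

Lemma polyboundedD s1 s2 : polybounded s1 -> polybounded s2 -> polybounded (fun n => s1 n + s2 n).
Proof.
move=> [c1 [k1 h1]] [c2 [k2 h2]]; exists (2 * (c1 + c2)), (k1 + k2) => n.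
have pow_le (k j : nat) : n ^ k <= n ^ (k + j) + 1.
  case: n => [|n]; last by apply: leq_trans (leq_addr _ _); rewrite leq_pexp2l // leq_addr.
  by case: k => [|k]; rewrite ?expn0 ?leq_addl // exp0n.
have := pow_le k1 k2; have := pow_le k2 k1; rewrite (addnC k2).
move: (h1 n) (h2 n); rewrite /pbound; move: (n ^ k1) (n ^ k2) (n ^ (k1 + k2)) => a b e; nia.
Qed.

Lemma polybounded_affine a s : polybounded s -> polybounded (fun n => a * n + a * s n + a).
Proof.
move=> hs; apply: polyboundedD; last by exists a, 0 => n; rewrite /pbound expn0 muln1 leq_addl.
apply: polyboundedD; first by exists a, 1 => n; rewrite /pbound expn1 leq_addr.
by case: hs => c [k h]; exists (a * c), k => n; rewrite /pbound -mulnA -mulnDr leq_mul2l h orbT.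
Qed.

Definition init_bits n (Y : n.+1.-tuple bool) : n.-tuple bool :=
  [tuple of belast (thead Y) (behead Y)].

Definition last_bit n (Y : n.+1.-tuple bool) : bool := last (thead Y) (behead Y).

Lemma tuple_rcons_eta n (Y : n.+1.-tuple bool) : tval Y = rcons (init_bits Y) (last_bit Y).
Proof. by rewrite -lastI {1}(tuple_eta Y). Qed.

Lemma split_last_computable (g : forall n, n.-tuple bool -> n.+1.-tuple bool) :
  poly_computable (m := S) g ->
  poly_computable (m := id) (fun n x => init_bits (g n x)) /\
  pred_poly_computable (fun n x => last_bit (g n x)).
Proof.
move=> [C [hC hg]]; split.
  exists (fun n => Circuit (gates (C n)) (take n (outs (C n)))); split.
    apply: polyboundedW hC => n; rewrite /csize /= size_take_min leq_add2l; exact: geq_minr.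
  move=> n x; rewrite eval_take_outs hg tuple_rcons_eta -cats1 take_size_cat //.
  by rewrite size_tuple.
exists (fun n => Circuit (gates (C n)) (drop n (outs (C n)))); split.
  by apply: polyboundedW hC => n; rewrite /csize /= size_drop leq_add2l leq_subr.
move=> n x; rewrite eval_drop_outs hg tuple_rcons_eta -cats1 drop_size_cat //.
by rewrite size_tuple.
Qed.

Lemma size_rcons_take n m (y : m.-tuple bool) r : n <= m -> size (rcons (take n y) r) == n.+1.
Proof. by move=> hnm; rewrite size_rcons size_takel ?size_tuple. Qed.

Definition append_bit n m (hnm : n <= m) (y : m.-tuple bool) (r : bool) : n.+1.-tuple bool :=
  Tuple (size_rcons_take y r hnm).

Lemma append_bit_computable (m : nat -> nat) (hm : forall n, n <= m n)
    (f : forall n, n.-tuple bool -> (m n).-tuple bool) (b : forall n, n.-tuple bool -> bool) :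
  poly_computable f -> pred_poly_computable b ->
  poly_computable (m := S) (fun n x => append_bit (hm n) (f n x) (b n x)).
Proof.
move=> [Cf [hCf hf]] [Cb [hCb hb]].
exists (fun n => parc n (Circuit (gates (Cf n)) (take n (outs (Cf n)))) (first_out n (Cb n))).
split.
  apply: polyboundedW (polybounded_affine 2 (polyboundedD hCf hCb)) => n.
  apply: leq_trans (csize_parc _ _ _) _; rewrite csize_first_out.
  have : size (take n (outs (Cf n))) <= size (outs (Cf n)) by rewrite size_take_min geq_minr.
  rewrite /csize /=; lia.
move=> n x; rewrite eval_parc ?size_tuple // eval_take_outs eval_first_out ?size_tuple //.
by rewrite hf /out1 hb cats1.
Qed.

Definition nd_select (c : nat -> bool) (A1 A2 : ndfam) : ndfam :=
  NDFam (fun n => if c n then ndc A1 n else ndc A2 n)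
        (fun n => if c n then ndw A1 n else ndw A2 n).

Lemma nd_out_select c A1 A2 n y :
  nd_out (nd_select c A1 A2) n y = if c n then nd_out A1 n y else nd_out A2 n y.
Proof. by rewrite /nd_out /=; case: (c n). Qed.

Lemma nd_poly_select c A1 A2 : nd_poly A1 -> nd_poly A2 -> nd_poly (nd_select c A1 A2).
Proof.
move=> h1 h2; apply: (polyboundedW _ (polyboundedD h1 h2)) => n /=.
by case: (c n); rewrite ?leq_addr ?leq_addl.
Qed.

Lemma existsb_orr (T : finType) (x0 : T) (P : pred T) r :
  [exists u, P u || r] = [exists u, P u] || r.
Proof.
case: r; last by rewrite orbF; apply: eq_existsb => u; rewrite orbF.
by rewrite orbT; apply/existsP; exists x0; rewrite orbT.
Qed.

Definition or_last_fam (t : bool) (A : ndfam) : ndfam :=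
  NDFam (fun n => or_last_circ n (ndw A n) t (ndc A n)) (ndw A).

Lemma nd_poly_or_last t A : nd_poly A -> nd_poly (or_last_fam t A).
Proof.
move=> hA; apply: (polyboundedW _ (polybounded_affine 8 hA)) => n /=.
by have := csize_or_last n (ndw A n) t (ndc A n); lia.
Qed.

Lemma nd_out_or_last A n (z : seq bool) r : size z = n ->
  nd_out (or_last_fam false A) n (rcons z r) = nd_out A n z || r.
Proof.
move=> hz; rewrite /nd_out -(existsb_orr [tuple of nseq _ false]).
by apply: eq_existsb => u; rewrite out1_or_last ?size_tuple // !addbF.
Qed.

Lemma co_out_or_last A n (z : seq bool) r : size z = n ->
  nd_out (or_last_fam true A) n (rcons z r) = ~~ co_out A n z || ~~ r.
Proof.
move=> hz; rewrite /nd_out /co_out negb_forall -(existsb_orr [tuple of nseq _ false]).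
by apply: eq_existsb => u; rewrite out1_or_last ?size_tuple // !addbT.
Qed.

Definition restrict_fam (m : nat -> nat) (r t : bool) (D : ndfam) : ndfam :=
  NDFam (fun n => restrict_circ n (m n) (ndw D n) r t (ndc D n)) (ndw D).

Lemma nd_poly_restrict m r t D : nd_poly D -> nd_poly (restrict_fam m r t D).
Proof.
move=> hD; apply: (polyboundedW _ (polybounded_affine 4 hD)) => n /=.
by rewrite csize_restrict; lia.
Qed.

Lemma nd_out_restrict m r D n (y : seq bool) : n <= m n -> size y = m n ->
  nd_out (restrict_fam m r false D) n y = nd_out D n (rcons (take n y) r).
Proof.
move=> hnm hy; apply: eq_existsb => u.
by rewrite /= out1_restrict ?size_tuple // addbF.
Qed.

Lemma co_out_restrict m r D n (y : seq bool) : n <= m n -> size y = m n ->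
  co_out (restrict_fam m r true D) n y = ~~ nd_out D n (rcons (take n y) r).
Proof.
move=> hnm hy; rewrite /co_out /nd_out negb_exists; apply: eq_forallb => u.
by rewrite /= out1_restrict ?size_tuple // addbT.
Qed.

Local Open Scope ring_scope.

Lemma probE n (P : n.-tuple bool -> bool) :
  prob n P = (\sum_(x : n.-tuple bool) (P x)%:R) / (2 ^ n)%:R.
Proof.
rewrite /prob cardsE -sum1_card natr_sum big_mkcond /=.
by congr (_ / _); apply: eq_bigr => x _; rewrite unfold_in; case: (P x).
Qed.

Lemma pow2_neq0 n : (2 ^ n)%:R != 0 :> rat.
Proof. by rewrite pnatr_eq0 expn_eq0. Qed.

Lemma prob_ext n (P Q : n.-tuple bool -> bool) : P =1 Q -> prob n P = prob n Q.
Proof. by move=> h; rewrite !probE; congr (_ / _); apply: eq_bigr => x _; rewrite h. Qed.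

Lemma probN n (P : n.-tuple bool -> bool) : prob n (fun x => ~~ P x) = 1 - prob n P.
Proof.
have complement : \sum_(x : n.-tuple bool) (~~ P x)%:R
                  = (2 ^ n)%:R - \sum_(x : n.-tuple bool) (P x)%:R :> rat.
  have <- : \sum_(x : n.-tuple bool) 1 = (2 ^ n)%:R :> rat.
    by rewrite sumr_const card_tuple card_bool.
  rewrite -sumrB.
  by apply: eq_bigr => x _; case: (P x); rewrite ?subrr ?subr0.
by rewrite !probE complement; field; exact: pow2_neq0.
Qed.

Lemma prob0 n : prob n (fun _ => false) = 0.
Proof. by rewrite probE big1 ?mul0r. Qed.

Lemma prob1 n : prob n (fun _ => true) = 1.
Proof. by rewrite -[LHS]/(prob n (fun _ => ~~ false)) probN prob0 subr0. Qed.

Lemma prob_split n (P B : n.-tuple bool -> bool) :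
  prob n P = prob n (fun x => P x && B x) + prob n (fun x => P x && ~~ B x).
Proof.
rewrite !probE -mulrDl -big_split; congr (_ / _); apply: eq_bigr => x _ /=.
by case: (P x); case: (B x); rewrite ?add0r ?addr0.
Qed.

Lemma prob_rcons n (Q : seq bool -> bool) :
  prob n.+1 (fun y => Q y) =
  (prob n (fun z => Q (rcons z false)) + prob n (fun z => Q (rcons z true))) / 2.
Proof.
pose h (p : n.-tuple bool * bool) : n.+1.-tuple bool := [tuple of rcons p.1 p.2].
have h_bij : bijective h.
  exists (fun Y => (init_bits Y, last_bit Y)).
    move=> [z r]; have := tuple_rcons_eta (h (z, r)); rewrite /= => /rcons_inj [ez er].
    by congr pair; [apply: val_inj | ].
  by move=> Y; apply: val_inj; rewrite /= -tuple_rcons_eta.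
rewrite !probE (reindex h) /=; last exact: onW_bij.
rewrite -(pair_big xpredT xpredT (fun (z : n.-tuple bool) r => (Q (rcons z r))%:R)) /=.
rewrite expnS natrM -mulrDl -big_split /=.
rewrite (eq_bigr (fun z : n.-tuple bool => (Q (rcons z false))%:R + (Q (rcons z true))%:R));
  last by move=> z _; rewrite big_bool /= addrC.
by field; rewrite pow2_neq0.
Qed.

Lemma prob_take n m (Q : seq bool -> bool) : (n <= m)%N ->
  prob m (fun y => Q (take n y)) = prob n (fun z => Q z).
Proof.
move=> /subnK <-; elim: (m - n)%N => [|d IH].
  by apply: prob_ext => y; rewrite take_oversize // size_tuple.
have take_rcons r (y : (d + n).-tuple bool) : take n (rcons y r) = take n y.
  by rewrite -cats1 takel_cat // size_tuple leq_addl.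
rewrite (prob_rcons (d + n) (fun s => Q (take n s))).
rewrite !(prob_ext (fun y => congr1 Q (take_rcons _ y))) IH.
by field.
Qed.

(* The super-core quantity Pr[Q rejects F x ++ [r] and B x = r] +
   1/2 Pr[Q accepts z ++ [r]] of the adversary [z |-> Q (rcons z r)] against
   the hidden bit [B x] of [F x]. *)
Definition score n (Q : seq bool -> bool) (F : n.-tuple bool -> seq bool)
    (B : n.-tuple bool -> bool) (r : bool) : rat :=
  prob n (fun x => ~~ Q (rcons (F x) r) && (B x == r)) + 1 / 2 * prob n (fun z => Q (rcons z r)).

(* The advantage of [Q] against [x |-> rcons (F x) (B x)] is the sum of the two
   scores minus one; both directions of the theorem are read off this identity. *)
Lemma advantage_score n (Q : seq bool -> bool) (F : n.-tuple bool -> seq bool)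
    (B : n.-tuple bool -> bool) :
  prob n.+1 (fun y => Q y) - prob n (fun x => Q (rcons (F x) (B x))) =
  score Q F B false + score Q F B true - 1.
Proof.
pose q r x := Q (rcons (F x) r).
have split_B : prob n (fun x => Q (rcons (F x) (B x))) =
               prob n (fun x => B x && q true x) + prob n (fun x => ~~ B x && q false x).
  rewrite (prob_split _ B); congr (_ + _); apply: prob_ext => x /=;
  by rewrite /q; case: (B x); rewrite ?andbT ?andbF.
have miss r : prob n (fun x => ~~ q r x && (B x == r)) =
              prob n (fun x => (if r then B x else ~~ B x) && ~~ q r x).
  by apply: prob_ext => x; case: r; case: (B x); rewrite ?andbT ?andbF.
have hit1 := prob_split B (q true).
have hit0 := prob_split (fun x => ~~ B x) (q false).
have cover := probN B.
rewrite /score prob_rcons split_B (miss false) (miss true) /=.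
rewrite /q /= in hit1 hit0 cover *.
lra.
Qed.

Lemma scoreE n (Q : seq bool -> bool) (F : n.-tuple bool -> seq bool) B r (P : seq bool -> bool) :
  (forall z : seq bool, size z = n -> Q (rcons z r) = P z) -> (forall x, size (F x) = n) ->
  score Q F B r = prob n (fun x => ~~ P (F x) && (B x == r)) + 1 / 2 * prob n (fun z => P z).
Proof.
move=> hQ hF; rewrite /score; congr (_ + 1 / 2 * _); apply: prob_ext => x.
  by rewrite hQ.
by rewrite hQ ?size_tuple.
Qed.

Lemma score_accept n (Q : seq bool -> bool) (F : n.-tuple bool -> seq bool) B r :
  (forall z : seq bool, size z = n -> Q (rcons z r)) -> (forall x, size (F x) = n) ->
  score Q F B r = 1 / 2.
Proof.
move=> hQ hF; rewrite (@scoreE _ _ _ _ _ (fun _ => true)) //.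
by rewrite (@prob_ext _ _ (fun _ => false)) // prob0 prob1 add0r mulr1.
Qed.

Lemma advantage_or_last n (Q P : seq bool -> bool) (F : n.-tuple bool -> seq bool)
    (B : n.-tuple bool -> bool) (s : bool) :
  (forall z r, size z = n -> Q (rcons z r) = P z || (r == s)) ->
  (forall x, size (F x) = n) ->
  prob n.+1 (fun y => Q y) - prob n (fun x => Q (rcons (F x) (B x))) =
  prob n (fun x => ~~ P (F x) && (s (+) B x)) + 1 / 2 * prob n (fun z => P z) - 1 / 2.
Proof.
move=> hQ hF; rewrite advantage_score.
have accept : score Q F B s = 1 / 2 by apply: score_accept => // z /hQ ->; rewrite eqxx orbT.
have other : score Q F B (~~ s) =
    prob n (fun x => ~~ P (F x) && (s (+) B x)) + 1 / 2 * prob n (fun z => P z).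
  rewrite (scoreE _ _ (P := P)) => [|z /hQ ->|//]; last by case: (s); rewrite orbF.
  by congr (_ + _); apply: prob_ext => x; case: (s); case: (B x).
by case: (s) accept other => /= -> ->; lra.
Qed.

Lemma super_core_of_super_bit (g : forall n, n.-tuple bool -> n.+1.-tuple bool) :
  super_bit g ->
  super_core (m := id) (fun n x => init_bits (g n x)) (fun n x => last_bit (g n x)).
Proof.
move=> [hg hsb]; split; first by case: (split_last_computable hg).
move=> [A1 [A2 [c [k [hA1 [hA2 [hc hinf]]]]]]].
set f := fun n x => init_bits (g n x); set b := fun n x => last_bit (g n x).
pose first_wins n := 1 / 2 + 1 / (pbound c k n)%:R <=
  prob n (fun x => ~~ nd_out A1 n (f n x) && ~~ b n x) + 1 / 2 * prob n (fun y => nd_out A1 n y).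
pose D := nd_select first_wins (or_last_fam false A1) (or_last_fam true A2).
have [N hN] := hsb D (nd_poly_select _ (nd_poly_or_last _ hA1) (nd_poly_or_last _ hA2)) c k hc.
have [n le_Nn wins] := hinf N; have small_adv := hN n le_Nn.
have sizeF x : size (tval (f n x)) = n by rewrite size_tuple.
rewrite (prob_ext (fun x => congr1 (nd_out D n) (tuple_rcons_eta (g n x)))) in small_adv.
case first_n : (first_wins n).
  rewrite (@advantage_or_last _ _ (nd_out A1 n) _ _ true) // in small_adv; last first.
    by move=> z r hz; rewrite nd_out_select first_n nd_out_or_last // eqb_id.
  by move: first_n; rewrite /first_wins; lra.
case: wins => [wins1|wins2]; first by rewrite /first_wins wins1 in first_n.
rewrite (@advantage_or_last _ _ (fun z => ~~ co_out A2 n z) _ _ false) // in small_adv.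
  rewrite (prob_ext (Q := fun x => co_out A2 n (f n x) && b n x)) in small_adv; first by lra.
  by move=> x; rewrite /= negbK.
by move=> z r hz; rewrite nd_out_select first_n co_out_or_last // eqbF_neg.
Qed.

Lemma score_restrict_nd (m : nat -> nat) (hm : forall n, (n <= m n)%N) D n
    (Y : n.-tuple bool -> (m n).-tuple bool) (B : n.-tuple bool -> bool) :
  let A := restrict_fam m false false D in
  score (nd_out D n) (fun x => take n (Y x)) B false =
  prob n (fun x => ~~ nd_out A n (Y x) && ~~ B x) + 1 / 2 * prob (m n) (fun y => nd_out A n y).
Proof.
rewrite /score; congr (_ + 1 / 2 * _).
  by apply: prob_ext => x; rewrite nd_out_restrict ?size_tuple // eqbF_neg.
rewrite [RHS](prob_ext (fun y => nd_out_restrict false D (hm n) (size_tuple y))).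
by rewrite (prob_take (fun s => nd_out D n (rcons s false)) (hm n)).
Qed.

Lemma score_restrict_co (m : nat -> nat) (hm : forall n, (n <= m n)%N) D n
    (Y : n.-tuple bool -> (m n).-tuple bool) (B : n.-tuple bool -> bool) :
  let A := restrict_fam m true true D in
  score (nd_out D n) (fun x => take n (Y x)) B true =
  prob n (fun x => co_out A n (Y x) && B x) + 1 / 2 * prob (m n) (fun y => ~~ co_out A n y).
Proof.
rewrite /score; congr (_ + 1 / 2 * _).
  by apply: prob_ext => x; rewrite co_out_restrict ?size_tuple // eqb_id.
rewrite [RHS](@prob_ext _ _ (fun y => nd_out D n (rcons (take n y) true))); last first.
  by move=> y; rewrite co_out_restrict ?size_tuple ?negbK.
by rewrite (prob_take (fun s => nd_out D n (rcons s true)) (hm n)).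
Qed.

Lemma not_eventually (P : nat -> Prop) :
  ~ (exists N, forall n, (N <= n)%N -> P n) -> forall N, exists2 n, (N <= n)%N & ~ P n.
Proof.
move=> not_ev N; apply: NNPP => all_P; apply: not_ev; exists N => n le_Nn.
by apply: NNPP => not_P; apply: all_P; exists n.
Qed.

Lemma inv_pbound_double c k n : (0 < c)%N ->
  1 / (pbound (2 * c) k n)%:R = 1 / (pbound c k n)%:R / 2 :> rat.
Proof.
move=> hc; have -> : pbound (2 * c) k n = (2 * pbound c k n)%N.
  by rewrite /pbound -mulnA -mulnDr.
by rewrite natrM; field; rewrite pnatr_eq0 -lt0n addn_gt0 hc orbT.
Qed.

Lemma super_bit_of_super_core (m : nat -> nat) (hm : forall n, (n <= m n)%N)
    (f : forall n, n.-tuple bool -> (m n).-tuple bool) (b : forall n, n.-tuple bool -> bool) :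
  poly_computable f -> super_core f b ->
  super_bit (fun n x => append_bit (hm n) (f n x) (b n x)).
Proof.
move=> hf [hb no_adversary]; split; first exact: append_bit_computable.
move=> D hD c k hc; apply: NNPP => /not_eventually large_adv; apply: no_adversary.
exists (restrict_fam m false false D), (restrict_fam m true true D), (2 * c)%N, k.
do 2 (split; first exact: nd_poly_restrict).
split => [|N]; first by rewrite muln_gt0.
have [n le_Nn /negP] := large_adv N; rewrite -leNgt => adv; exists n => //.
have := advantage_score (nd_out D n) (fun x => take n (f n x)) (b n).
rewrite (score_restrict_nd hm) (score_restrict_co hm) inv_pbound_double // => adv_eq.
set s1 := prob n _ + _ in adv_eq *; set s2 := prob n _ + _ in adv_eq *.
have large_sum : 1 / (pbound c k n)%:R <= s1 + s2 - 1 by rewrite -adv_eq.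
have [small1|big1] := ltrP s1 (1 / 2 + 1 / (pbound c k n)%:R / 2); [right | by left].
lra.
Qed.

Local Close Scope ring_scope.

Theorem theorem6p6 :
  (exists (m : nat -> nat) (f : forall n, n.-tuple bool -> (m n).-tuple bool)
          (b : forall n, n.-tuple bool -> bool),
      (forall n, n <= m n) /\ poly_computable f /\ super_core f b)
  <->
  (exists g : forall n, n.-tuple bool -> (n.+1).-tuple bool, super_bit g).
Proof.
split=> [[m [f [b [hm [hf hcore]]]]] | [g hg]].
  by exists (fun n x => append_bit (hm n) (f n x) (b n x)); exact: super_bit_of_super_core.
exists id, (fun n x => init_bits (g n x)), (fun n x => last_bit (g n x)).
split=> //; split; first by case: (split_last_computable (proj1 hg)).
exact: super_core_of_super_bit.
Qed.
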